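(* Let $E\subset\mathbb{R}^2$ be a polygon with vertices $\mathbf{q}_1,\ldots,\mathbf{q}_n$, let $\gamma>0$ be a constant and $a^E(u,v)=\gamma\int_E\nabla u\cdot\nabla v\,\mathrm{d}\mathbf{x}$. Let $\mathcal{W}(E)$ be the space of functions $u:E\to\mathbb{R}$ that are affine on each edge of $E$ and satisfy $\Delta u=0$ in $E$. Let $\mathcal{W}_R(E)$ be the space of constant functions on $E$, $\mathcal{W}_C(E)=\{u \text{ affine on } E:\ \bar u=0\}$, and define, for $v\in\mathcal{W}(E)$, $\pi_Rv:=\bar v$ (a constant function), $\pi_Cv(\mathbf{x}):=\langle\nabla v\rangle\cdot(\mathbf{x}-\overline{\mathbf{q}})$ and $\pi_{\mathcal P}v:=\pi_Cv+\pi_Rv$. Then: (i) for all $r\in\mathcal{W}_R(E)$, $c\in\mathcal{W}_C(E)$ and $v\in\mathcal{W}(E)$, $a^E(r,v)=0$ and $a^E(c,v-\pi_Cv)=0$; (ii) for all $u,v\in\mathcal{W}(E)$, $a^E(u,v)=a^E(\pi_Cu,\pi_Cv)+a^E(u-\pi_{\mathcal P}u,\,v-\pi_{\mathcal P}v)$.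
   Context: For a continuous function $v$ on $E$, $\bar v=\frac1n\sum_{j=1}^n v(\mathbf{q}_j)$ is the average of its values at the vertices; $\overline{\mathbf{q}}=\frac1n\sum_j\mathbf{q}_j$; for an integrable (possibly vector-valued) function $w$, $\langle w\rangle=\frac{1}{|E|}\int_Ew\,\mathrm{d}\mathbf{x}$. *)

From HB Require Import structures.
From mathcomp Require Import all_boot all_order all_algebra.
From mathcomp Require Import all_classical all_reals all_analysis.
Set Implicit Arguments. Unset Strict Implicit. Unset Printing Implicit Defensive.
Import Order.TTheory GRing.Theory Num.Theory.
Import numFieldNormedType.Exports.
Local Open Scope classical_set_scope.
Local Open Scope ring_scope.

Section Defs.
Variable R : realType.

Definition leb2 := ((@lebesgue_measure R) \x (@lebesgue_measure R))%E.

Definition segment (a b : R * R) : set (R * R) :=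
  [set (1 - t) *: a + t *: b | t in `[0, 1]%classic].

Definition edge (n : nat) (q : nat -> R * R) (i : nat) : set (R * R) :=
  segment (q i) (q ((i.+1 %% n)%N)).

(* E is the closed region bounded by the simple closed polygon q_0 ... q_(n-1) *)
Definition is_polygon (E : set (R * R)) (n : nat) (q : nat -> R * R) : Prop :=
  [/\ (3 <= n)%N,
      ({in [set i | (i < n)%N] &, injective q} /\
      (forall i j, (i < n)%N -> (j < n)%N -> i <> j ->
         edge n q i `&` edge n q j `<=`
         [set q i; q ((i.+1 %% n)%N)] `&` [set q j; q ((j.+1 %% n)%N)])),
      compact E,
      E = closure (interior E) &
      E `\` interior E = \bigcup_(i in [set i | (i < n)%N]) edge n q i].

Definition dx (u : R * R -> R) : R * R -> R := fun x => 'D_((1, 0) : R * R) u x.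
Definition dy (u : R * R -> R) : R * R -> R := fun x => 'D_((0, 1) : R * R) u x.
Definition grad_dot (u v : R * R -> R) : R * R -> R :=
  fun x => dx u x * dx v x + dy u x * dy v x.

(* |E| and the average <w> = (1/|E|) int_E w (integrals over the interior;
   the boundary of a polygon is Lebesgue-null) *)
Definition area (E : set (R * R)) : R := fine (leb2 (interior E)).
Definition mean (E : set (R * R)) (w : R * R -> R) : R :=
  (area E)^-1 * Rintegral leb2 (interior E) w.

Definition aE (gamma : R) (E : set (R * R)) (u v : R * R -> R) : R :=
  gamma * Rintegral leb2 (interior E) (grad_dot u v).

Definition vavg (n : nat) (q : nat -> R * R) (v : R * R -> R) : R :=
  n%:R^-1 * \sum_(j < n) v (q j).
Definition qbar (n : nat) (q : nat -> R * R) : R * R :=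
  n%:R^-1 *: \sum_(j < n) q j.

Definition affine_fun (g : R * R) (c : R) : R * R -> R :=
  fun x => g.1 * x.1 + g.2 * x.2 + c.

Definition WE (E : set (R * R)) (n : nat) (q : nat -> R * R) (u : R * R -> R)
  : Prop :=
  [/\ {within E, continuous u},
      (forall i, (i < n)%N -> exists g c,
         forall x, edge n q i x -> u x = affine_fun g c x),
      (forall x, interior E x ->
         [/\ differentiable u x, differentiable (dx u) x,
             differentiable (dy u) x & dx (dx u) x + dy (dy u) x = 0]),
      leb2.-integrable (interior E) (fun x => ((dx u x) ^+ 2)%:E) &
      leb2.-integrable (interior E) (fun x => ((dy u x) ^+ 2)%:E)].

Definition WR (u : R * R -> R) : Prop := exists c, u = fun _ => c.
Definition WC (n : nat) (q : nat -> R * R) (u : R * R -> R) : Prop :=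
  (exists g c, u = affine_fun g c) /\ vavg n q u = 0.

Definition proj_R (n : nat) (q : nat -> R * R) (v : R * R -> R) : R * R -> R :=
  fun _ => vavg n q v.
Definition proj_C (E : set (R * R)) (n : nat) (q : nat -> R * R) (v : R * R -> R)
  : R * R -> R :=
  fun x => mean E (dx v) * (x.1 - (qbar n q).1) + mean E (dy v) * (x.2 - (qbar n q).2).
Definition proj_P (E : set (R * R)) (n : nat) (q : nat -> R * R) (v : R * R -> R)
  : R * R -> R :=
  fun x => proj_C E n q v x + proj_R n q v x.

End Defs.

(* Only gradients enter a^E, and pi_C v, pi_P v are affine with gradient <grad v>.
   So grad (v - pi_P v) = grad v - <grad v> has mean zero over E, which makes
   constants a^E-orthogonal to everything and affine functions a^E-orthogonal
   to v - pi_C v; and the mean/fluctuation splitting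
   int f g = |E| <f><g> + int (f - <f>)(g - <g>), applied to both components of
   the gradients, is (ii). *)

From HB Require Import structures.
From mathcomp Require Import all_boot all_order all_algebra.
From mathcomp Require Import all_classical all_reals all_analysis.
From mathcomp Require Import measurable_realfun lra ring.
Import Order.TTheory GRing.Theory Num.Theory.
Import numFieldNormedType.Exports.
Local Open Scope classical_set_scope.
Local Open Scope ring_scope.

Section average.
Context {d} {T : measurableType d} {R : realType} {mu : {measure set T -> \bar R}}.
Context {D : set T}.
Hypotheses (mD : measurable D) (muD_lty : (mu D < +oo)%E).

Local Notation integrable f := (mu.-integrable D (EFin \o f)).

Definition average (f : T -> R) : R :=
  (fine (mu D))^-1 * \int[mu]_(x in D) f x.

Lemma integrable_cst (k : R) : integrable (fun=> k).
Proof.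
apply/integrableP; split; first exact/measurable_EFinP/measurable_cst.
by rewrite integral_cst //=; apply: lte_mul_pinfty.
Qed.

Lemma integrableD_real {f g : T -> R} :
  integrable f -> integrable g -> integrable (fun x => f x + g x).
Proof.
by move=> fi gi; apply: (eq_integrable mD _ _ _) (integrableD mD fi gi) => // x _.
Qed.

Lemma integrableZl_real (k : R) {f : T -> R} :
  integrable f -> integrable (fun x => k * f x).
Proof.
by move=> fi; apply: (eq_integrable mD _ _ _) (integrableZl mD k fi) => // x _.
Qed.

Lemma integrable_mul_of_sqr {f g : T -> R} :
  measurable_fun D f -> measurable_fun D g ->
  mu.-integrable D (fun x => (f x ^+ 2)%:E) ->
  mu.-integrable D (fun x => (g x ^+ 2)%:E) ->
  integrable (fun x => f x * g x).
Proof.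
move=> mf mg f2i g2i.
apply: le_integrable (integrableD mD f2i g2i) => //.
  exact/measurable_EFinP/measurable_funM.
move=> x _; rewrite /= lee_fin normrM [X in _ <= X]ger0_norm; last first.
  by rewrite addr_ge0 ?sqr_ge0.
(* [|f g| <= f^2 + g^2] *)
rewrite -(real_normK (num_real (f x))) -(real_normK (num_real (g x))).
have := normr_ge0 (f x); have := normr_ge0 (g x); nra.
Qed.

Lemma integrable_of_sqr {f : T -> R} :
  measurable_fun D f -> mu.-integrable D (fun x => (f x ^+ 2)%:E) ->
  integrable f.
Proof.
move=> mf f2i.
have one2i : mu.-integrable D (fun x => ((fun=> 1 : R) x ^+ 2)%:E).
  by apply: (eq_integrable mD _ _ _) (integrable_cst 1) => // x _; rewrite /= expr1n.
have := integrable_mul_of_sqr mf (measurable_cst _) f2i one2i.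
by apply: eq_integrable => // x _; rewrite /= mulr1.
Qed.

Lemma Rintegral_null {f : T -> R} : integrable f -> fine (mu D) = 0 ->
  \int[mu]_(x in D) f x = 0.
Proof.
move=> /integrableP[mf _] muD0.
have muD_eq0 : mu D = 0%E by rewrite -(@fineK _ (mu D)) ?muD0 // ge0_fin_numE.
by rewrite /Rintegral null_set_integral.
Qed.

Lemma Rintegral_sub_average {f : T -> R} : integrable f ->
  \int[mu]_(x in D) (f x - average f) = 0.
Proof.
move=> fi; rewrite RintegralB // ?integrable_cst // Rintegral_cst // /average.
have [muD0|muD_neq0] := eqVneq (fine (mu D)) 0.
  by rewrite Rintegral_null // muD0 !mulr0 subr0.
by rewrite mulrAC mulVf // mul1r subrr.
Qed.

Lemma integrable_sub_average {f : T -> R} : integrable f ->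
  integrable (fun x => f x - average f).
Proof.
by move=> fi; apply: integrableD_real => //; exact: integrable_cst.
Qed.

Lemma Rintegral_lin_sub_average (k1 k2 : R) {f1 f2 : T -> R} :
  integrable f1 -> integrable f2 ->
  \int[mu]_(x in D) (k1 * (f1 x - average f1) + k2 * (f2 x - average f2)) = 0.
Proof.
move=> f1i f2i.
have c1i := integrable_sub_average f1i; have c2i := integrable_sub_average f2i.
rewrite RintegralD ?integrableZl_real // !RintegralZl //.
by rewrite !Rintegral_sub_average // !mulr0 addr0.
Qed.

Lemma integrable_mul_sub_average {f g : T -> R} :
  integrable f -> integrable g -> integrable (fun x => f x * g x) ->
  integrable (fun x => (f x - average f) * (g x - average g)).
Proof.
move=> fi gi fgi.
have := integrableD_real (integrableD_real fgi (integrableZl_real (- average g) fi))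
  (integrableD_real (integrableZl_real (- average f) gi)
                    (integrable_cst (average f * average g))).
by apply: eq_integrable => // x _; congr (_%:E); ring.
Qed.

Lemma Rintegral_mul_average {f g : T -> R} :
  integrable f -> integrable g -> integrable (fun x => f x * g x) ->
  \int[mu]_(x in D) (f x * g x) =
  \int[mu]_(x in D) (average f * average g) +
  \int[mu]_(x in D) ((f x - average f) * (g x - average g)).
Proof.
move=> fi gi fgi.
have cfgi := integrable_mul_sub_average fi gi fgi.
have lini : integrable (fun x =>
    average g * (f x - average f) + average f * (g x - average g)).
  by apply: integrableD_real; apply: integrableZl_real; exact: integrable_sub_average.
rewrite (eq_Rintegral _ (g := fun x => average f * average g +
  ((f x - average f) * (g x - average g) +
   (average g * (f x - average f) + average f * (g x - average g))))).
  rewrite 2?RintegralD ?integrable_cst ?(integrableD_real cfgi lini) //.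
  by rewrite Rintegral_lin_sub_average // addr0.
by move=> x _; ring.
Qed.

Lemma Rintegral_dot_average {f1 f2 g1 g2 : T -> R} :
  integrable f1 -> integrable f2 -> integrable g1 -> integrable g2 ->
  integrable (fun x => f1 x * g1 x) -> integrable (fun x => f2 x * g2 x) ->
  \int[mu]_(x in D) (f1 x * g1 x + f2 x * g2 x) =
  \int[mu]_(x in D) (average f1 * average g1 + average f2 * average g2) +
  \int[mu]_(x in D) ((f1 x - average f1) * (g1 x - average g1) +
                     (f2 x - average f2) * (g2 x - average g2)).
Proof.
move=> f1i f2i g1i g2i fg1i fg2i.
rewrite !RintegralD ?integrable_cst ?integrable_mul_sub_average //.
rewrite (Rintegral_mul_average f1i g1i fg1i) (Rintegral_mul_average f2i g2i fg2i).
by rewrite addrACA.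
Qed.

End average.
Arguments average {d T R} mu D f.

Local Notation plane R := (measurableTypeR R * measurableTypeR R)%type.

Section plane.
Variable R : realType.

(* Open rectangles with rational centres and radii form a countable base. *)
Lemma open_measurable_plane (A : set (R * R)) : open A -> measurable (A : set (plane R)).
Proof.
move=> oA.
pose box (t : rat * rat * rat) : set (R * R) :=
  ball (ratr t.1.1 : R) (ratr t.2) `*` ball (ratr t.1.2 : R) (ratr t.2).
pose F t := if `[< box t `<=` A >] then box t else set0.
have -> : A = \bigcup_t F t.
  apply/seteqP; split; last first.
    by move=> x [t _]; rewrite /F; case: ifPn => // /asboolP; apply.
  move=> x Ax; have /nbhs_ballP[e e0 exA] : nbhs x A by exact: open_nbhs_nbhs.
  have [a1] : exists r : rat, ratr r \in `]x.1 - e / 4, x.1 + e / 4[.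
    by apply: rat_in_itvoo; rewrite ltrBlDr -addrA ltrDl addr_gt0 ?divr_gt0.
  have [a2] : exists r : rat, ratr r \in `]x.2 - e / 4, x.2 + e / 4[.
    by apply: rat_in_itvoo; rewrite ltrBlDr -addrA ltrDl addr_gt0 ?divr_gt0.
  have [c] : exists r : rat, ratr r \in `]e / 4, e / 2[.
    by apply: rat_in_itvoo; rewrite ltr_pM2l // ltf_pV2 ?posrE //; lra.
  rewrite !in_itv /= => /andP[c1 c2] /andP[a21 a22] /andP[a11 a12].
  have boxA : box (a1, a2, c) `<=` A.
    move=> y [/= y1 y2]; apply: exA; split; move: y1 y2;
      rewrite -!ball_normE /ball_ /= => y1 y2.
    - rewrite (le_lt_trans (ler_distD (ratr a1) _ _)) //.
      have : `|x.1 - ratr a1| < e / 4 by rewrite ltr_norml; apply/andP; split; lra.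
      lra.
    - rewrite (le_lt_trans (ler_distD (ratr a2) _ _)) //.
      have : `|x.2 - ratr a2| < e / 4 by rewrite ltr_norml; apply/andP; split; lra.
      lra.
  exists (a1, a2, c) => //; rewrite /F; case: ifPn => [_|/asboolP //].
  rewrite /box -!ball_normE /ball_ /=.
  by split => /=; rewrite ltr_norml; apply/andP; split; lra.
apply: (@countable_bigcupT_measurable _ (plane R) _ F) => // t.
rewrite /F; case: ifPn => _ //.
by apply: measurableX; apply: open_measurable; exact: ball_open.
Qed.

Lemma continuous_measurable_fun_plane (D : set (R * R)) (f : R * R -> R) :
  open D -> {in D, continuous f} -> measurable_fun (D : set (plane R)) (f : plane R -> R).
Proof.
move=> oD cf; apply: (@measurability _ _ _ _ _ _ (@RGenOpens.G R)).
  exact: RGenOpens.measurableE.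
move=> _ [_ [a [b ->] <-]]; apply: open_measurable_plane.
rewrite openE => x [Dx fx]; apply: filterI; first exact: open_nbhs_nbhs.
by apply: (cf x (mem_set Dx)); apply: open_nbhs_nbhs; split => //; exact: interval_open.
Qed.

Lemma leb2_lty_sub_compact {K A : set (R * R)} :
  compact K -> A `<=` K -> measurable (A : set (plane R)) -> (@leb2 R A < +oo)%E.
Proof.
move=> /compact_bounded[M [_ HM]] AK mA.
have /HM KM : M + 1 > M by rewrite ltrDl.
have mII : measurable (`[- (M + 1), M + 1]%classic `*` `[- (M + 1), M + 1]%classic
  : set (plane R)) by apply: measurableX.
rewrite (@le_lt_trans _ _ (@leb2 R (`[- (M + 1), M + 1]%classic `*`
                                     `[- (M + 1), M + 1]%classic : set (plane R)))) //.
  apply: le_measure; rewrite ?inE //.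
  move=> x /AK /KM /=; rewrite (@prod_normE _ R R x) ge_max => /andP[x1 x2].
  by split; rewrite /= in_itv /= -ler_norml.
rewrite /leb2 product_measure1E //= !lebesgue_measure_itv /=.
by case: ifP => _; rewrite -?EFinM ?ltry // mul0e ltry.
Qed.

End plane.

Section affine_derivatives.
Variable R : realType.
Implicit Types (g : R * R) (c : R) (x v : R * R).

Lemma affine_fun_difference_quotient g c x v :
  (fun h : R => h^-1 *: ((affine_fun g c \o shift x) (h *: v) - affine_fun g c x))
    @ (0 : R)^' --> g.1 * v.1 + g.2 * v.2.
Proof.
apply: (@cvg_trans _ ((fun=> g.1 * v.1 + g.2 * v.2) @ (0 : R)^')); last exact: cvg_cst.
apply: near_eq_cvg.
near=> h; have h0 : h != 0 by near: h; exact: nbhs_dnbhs_neq.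
rewrite /affine_fun /= /shift /= -[h *: v.1]/(h * v.1) -[h *: v.2]/(h * v.2).
set k := (X in h^-1 *: X); rewrite -[h^-1 *: k]/(h^-1 * k) {}/k.
by field.
Unshelve. all: by end_near.
Qed.

Lemma derive_affine_fun g c x v : 'D_v (affine_fun g c) x = g.1 * v.1 + g.2 * v.2.
Proof. exact: cvg_lim (affine_fun_difference_quotient g c x v). Qed.

Lemma derivable_affine_fun g c x v : derivable (affine_fun g c) x v.
Proof. exact: cvgP (affine_fun_difference_quotient g c x v). Qed.

Lemma dx_affine_fun g c x : dx (affine_fun g c) x = g.1.
Proof. by rewrite /dx derive_affine_fun /= mulr1 mulr0 addr0. Qed.

Lemma dy_affine_fun g c x : dy (affine_fun g c) x = g.2.
Proof. by rewrite /dy derive_affine_fun /= mulr1 mulr0 add0r. Qed.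

Lemma derive_sub_affine_fun (u : R * R -> R) g c x v : differentiable u x ->
  'D_v (fun y => u y - affine_fun g c y) x = 'D_v u x - (g.1 * v.1 + g.2 * v.2).
Proof.
move=> du; rewrite -[fun y => _]/(u - affine_fun g c) deriveB.
- by rewrite derive_affine_fun.
- exact: diff_derivable.
- exact: derivable_affine_fun.
Qed.

Lemma dx_sub_affine_fun (u : R * R -> R) g c x : differentiable u x ->
  dx (fun y => u y - affine_fun g c y) x = dx u x - g.1.
Proof. by move=> du; rewrite /dx derive_sub_affine_fun //= mulr1 mulr0 addr0. Qed.

Lemma dy_sub_affine_fun (u : R * R -> R) g c x : differentiable u x ->
  dy (fun y => u y - affine_fun g c y) x = dy u x - g.2.
Proof. by move=> du; rewrite /dy derive_sub_affine_fun //= mulr1 mulr0 add0r. Qed.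

End affine_derivatives.

Section energy.
Variables (R : realType) (E : set (R * R)) (n : nat) (q : nat -> R * R).
Hypothesis E_compact : compact E.

Local Notation integrable f := ((@leb2 R).-integrable (interior E) (EFin \o f)).

Let mE : measurable (interior E : set (plane R)).
Proof. exact: open_measurable_plane (@open_interior _ E). Qed.

Let E_lty : (leb2 (interior E) < +oo)%E.
Proof. exact: leb2_lty_sub_compact E_compact (@interior_subset _ E) mE. Qed.

Lemma mean_average (w : R * R -> R) : mean E w = average (@leb2 R) (interior E) w.
Proof. by []. Qed.

Lemma proj_C_affine (v : R * R -> R) :
  exists c, proj_C E n q v = affine_fun (mean E (dx v), mean E (dy v)) c.
Proof.
exists (- (mean E (dx v) * (qbar n q).1 + mean E (dy v) * (qbar n q).2)).
apply/funext => x; rewrite /proj_C /affine_fun /=.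
by move: (mean E (dx v)) (mean E (dy v)) (qbar n q) => a b Q; ring.
Qed.

Lemma proj_P_affine (v : R * R -> R) :
  exists c, proj_P E n q v = affine_fun (mean E (dx v), mean E (dy v)) c.
Proof.
have [c projCE] := proj_C_affine v; exists (c + vavg n q v).
by apply/funext => x; rewrite /proj_P projCE /proj_R /affine_fun /= addrA.
Qed.

Lemma WE_grad_measurable {u : R * R -> R} : WE E n q u ->
  measurable_fun (interior E : set (plane R)) (dx u) /\
  measurable_fun (interior E : set (plane R)) (dy u).
Proof.
case=> _ _ harm _ _.
by split; apply: continuous_measurable_fun_plane (@open_interior _ E) _
  => x /set_mem /harm[_ ? ? _]; exact: differentiable_continuous.
Qed.

Lemma WE_grad_integrable {u : R * R -> R} : WE E n q u ->
  integrable (dx u) /\ integrable (dy u).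
Proof.
move=> Wu; have [mdx mdy] := WE_grad_measurable Wu; case: Wu => _ _ _ dx2i dy2i.
by split; [exact (integrable_of_sqr mE E_lty mdx dx2i)|
           exact (integrable_of_sqr mE E_lty mdy dy2i)].
Qed.

Lemma WE_grad_mul_integrable {u v : R * R -> R} : WE E n q u -> WE E n q v ->
  integrable (fun x => dx u x * dx v x) /\ integrable (fun x => dy u x * dy v x).
Proof.
move=> Wu Wv; have [mdxu mdyu] := WE_grad_measurable Wu.
have [mdxv mdyv] := WE_grad_measurable Wv.
case: Wu Wv => _ _ _ dxu2i dyu2i [_ _ _ dxv2i dyv2i].
by split; [exact (integrable_mul_of_sqr mE mdxu mdxv dxu2i dxv2i)|
           exact (integrable_mul_of_sqr mE mdyu mdyv dyu2i dyv2i)].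
Qed.

Lemma aE_cst_l (gamma k : R) (v : R * R -> R) : aE gamma E (fun=> k) v = 0.
Proof.
rewrite /aE (eq_Rintegral (@leb2 R) (g := fun=> 0)) ?Rintegral_cst ?mul0r ?mulr0 //.
by move=> x _; rewrite /grad_dot /dx /dy !derive_cst !mul0r addr0.
Qed.

Lemma aE_affine_sub_proj_C (gamma : R) (g : R * R) (c : R) (v : R * R -> R) :
  WE E n q v -> aE gamma E (affine_fun g c) (fun x => v x - proj_C E n q v x) = 0.
Proof.
move=> Wv; have [dxi dyi] := WE_grad_integrable Wv.
have [c' ->] := proj_C_affine v.
rewrite /aE (eq_Rintegral (@leb2 R) (f := grad_dot _ _)
  (g := fun x => g.1 * (dx v x - mean E (dx v)) + g.2 * (dy v x - mean E (dy v)))).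
  by rewrite !mean_average (Rintegral_lin_sub_average mE E_lty g.1 g.2 dxi dyi) mulr0.
move=> x /set_mem Ex; case: Wv => _ _ /(_ x Ex)[dv _ _ _] _ _.
by rewrite /grad_dot dx_affine_fun dy_affine_fun dx_sub_affine_fun // dy_sub_affine_fun.
Qed.

Lemma aE_proj_decomposition (gamma : R) (u v : R * R -> R) :
  WE E n q u -> WE E n q v ->
  aE gamma E u v = aE gamma E (proj_C E n q u) (proj_C E n q v) +
    aE gamma E (fun x => u x - proj_P E n q u x) (fun x => v x - proj_P E n q v x).
Proof.
move=> Wu Wv; have [dxui dyui] := WE_grad_integrable Wu.
have [dxvi dyvi] := WE_grad_integrable Wv.
have [dxuvi dyuvi] := WE_grad_mul_integrable Wu Wv.
have [cu ->] := proj_C_affine u; have [cv ->] := proj_C_affine v.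
have [pu ->] := proj_P_affine u; have [pv ->] := proj_P_affine v.
rewrite /aE -mulrDr /grad_dot.
rewrite (Rintegral_dot_average mE E_lty dxui dyui dxvi dyvi dxuvi dyuvi).
congr (_ * (_ + _)).
  by apply: eq_Rintegral => x _; rewrite !dx_affine_fun !dy_affine_fun.
apply: eq_Rintegral => x /set_mem Ex.
case: Wu Wv => _ _ /(_ x Ex)[du _ _ _] _ _ [_ _ /(_ x Ex)[dv _ _ _] _ _].
by rewrite !dx_sub_affine_fun // !dy_sub_affine_fun.
Qed.

End energy.

Theorem lemma5p1 (R : realType) (E : set (R * R)) (n : nat) (q : nat -> R * R)
  (gamma : R) :
  is_polygon E n q -> 0 < gamma ->
  (forall r c v, WR r -> WC n q c -> WE E n q v ->
     aE gamma E r v = 0 /\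
     aE gamma E c (fun x => v x - proj_C E n q v x) = 0) /\
  (forall u v, WE E n q u -> WE E n q v ->
     aE gamma E u v =
     aE gamma E (proj_C E n q u) (proj_C E n q v) +
     aE gamma E (fun x => u x - proj_P E n q u x) (fun x => v x - proj_P E n q v x)).
Proof.
move=> [_ _ E_compact _ _] _; split.
  move=> _ _ v [k ->] [[g [c ->]] _] Wv; split; first exact: aE_cst_l.
  exact: aE_affine_sub_proj_C.
by move=> u v; exact: aE_proj_decomposition.
Qed.
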